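(* Let $n\ge 1$ and let $V^n$ be the $(n+1)\times(n+1)$ matrix $V^n_{ij}=B^n_j(i/n)$, $0\le i,j\le n$. Define $$H^n_{ij}=\binom{n+1}{i+j+1},\qquad \widetilde H^n_{ij}=\sum_{k=0}^{i+j+1}\binom{n-k+1}{n-i-j}\frac{s(n+1,k)}{n^{n-k+1}},$$ $$T^n_{ij}=\binom{n+1}{j-i},\qquad \widetilde T^n_{ij}=\sum_{k=0}^{j-i}\binom{n-k+1}{j-i-k}\frac{s(n+1,k)}{n^{n-k+1}},$$ $$D^n=\mathrm{diag}\big((-1)^{n-j}\,j!\,(n-j)!\big)_{j=0}^n,\qquad \Delta^n=\mathrm{diag}\Big(\binom{n}{j}\Big)_{j=0}^n,\qquad \widetilde V^n_{ij}=i^j(n-i)^{n-j}.$$ Then $$(V^n)^{-1}=(\Delta^n)^{-1}\big[\widetilde H^nT^n-H^n\widetilde T^n\big](\widetilde V^n)^T(D^n)^{-1}.$$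
   Context: $B^n_j(x)=\binom{n}{j}x^j(1-x)^{n-j}$. $s(n,k)$ denotes the signed Stirling numbers of the first kind, defined by $\prod_{i=0}^{n-1}(y-i)=\sum_{k=0}^{n}s(n,k)y^k$. Conventions: $\binom{a}{b}=0$ if $b<0$ or $b>a$; empty sums are $0$; $0^0=1$. *)

From HB Require Import structures.
From mathcomp Require Import all_boot all_order all_algebra.
Set Implicit Arguments. Unset Strict Implicit. Unset Printing Implicit Defensive.
Import Order.TTheory GRing.Theory Num.Theory.
Local Open Scope ring_scope.

Definition stirling1 (n k : nat) : int :=
  (\prod_(i < n) ('X - (i%:Z)%:P) : {poly int})`_k.

Definition binz (a b : int) : nat :=
  match a, b with
  | Posz a', Posz b' => 'C(a', b')
  | _, _ => 0%N
  end.

Section Mats.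
Variable R : realFieldType.
Variable n : nat.

Definition bern (j : nat) (x : R) : R :=
  ('C(n, j))%:R * x ^+ j * (1 - x) ^+ (n - j).

Definition Vmx : 'M[R]_(n.+1) :=
  \matrix_(i, j) bern j (i%:R / n%:R).

Definition Hmx : 'M[R]_(n.+1) :=
  \matrix_(i, j) ('C(n.+1, (i + j).+1))%:R.

Definition Htmx : 'M[R]_(n.+1) :=
  \matrix_(i, j) \sum_(0 <= k < (i + j).+2)
     (binz (n%:Z - k%:Z + 1) (n%:Z - i%:Z - j%:Z))%:R
     * (stirling1 n.+1 k)%:~R / (n%:R ^ (n%:Z - k%:Z + 1)).

Definition Tmx : 'M[R]_(n.+1) :=
  \matrix_(i, j) (binz n.+1 (j%:Z - i%:Z))%:R.

Definition Ttmx : 'M[R]_(n.+1) :=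
  \matrix_(i, j) \sum_(0 <= k < (j - i).+1 | (i <= j)%N)
     (binz (n%:Z - k%:Z + 1) (j%:Z - i%:Z - k%:Z))%:R
     * (stirling1 n.+1 k)%:~R / (n%:R ^ (n%:Z - k%:Z + 1)).

Definition Dmx : 'M[R]_(n.+1) :=
  diag_mx (\row_(j < n.+1) ((-1) ^+ (n - j) * (j`!)%:R * ((n - j)`!)%:R)).

Definition Deltamx : 'M[R]_(n.+1) :=
  diag_mx (\row_(j < n.+1) ('C(n, j))%:R).

Definition Vtmx : 'M[R]_(n.+1) :=
  \matrix_(i, j) ((i : nat)%:R ^+ j * (n%:R - (i : nat)%:R) ^+ (n - j)).

End Mats.

From mathcomp Require Import all_boot all_order all_algebra.
From mathcomp Require Import ring zify.
Set Implicit Arguments. Unset Strict Implicit. Unset Printing Implicit Defensive.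
Import GRing.Theory Num.Theory.
Local Open Scope ring_scope.

(* Write Vt for the matrix Vtmx, Vt_ij = i^j (n-i)^(n-j), and M for
   Htmx * Tmx - Hmx * Ttmx.  Since B^n_j(i/n) = n^-n C(n,j) i^j (n-i)^(n-j),
   we have V = n^-n Vt Delta, so the theorem follows from the purely
   matrix-theoretic lemma [invmx_congruence] once we know the congruence
       Vt * M * Vt^T = n^n D.                                    (star)
   Entry (a,b) of the left-hand side is a Bezoutian: for binary forms
   F_f(x,y) = sum_p f_p x^p y^(n+1-p) of degree n+1 it evaluates
       (F_w(a,n-a) F_e(b,n-b) - F_w(b,n-b) F_e(a,n-a)) / (n (a-b)),
   where e_p = C(n+1,p) gives F_e(x,y) = (x+y)^(n+1) and the Stirling-based
   coefficients w_p give F_w(x,n-x) = omega(x) = x(x-1)...(x-n).  As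
   omega vanishes at the nodes b, the quotient is n^n omega(x)/(x-b) at
   x = a, i.e. n^n omega'(b) [a = b], and omega'(b) = (-1)^(n-b) b! (n-b)!
   is the diagonal of D. *)

Lemma sumr_nat0 (R : nmodType) (m n : nat) (F : nat -> R) :
  (forall i, (m <= i < n)%N -> F i = 0) -> \sum_(m <= i < n) F i = 0.
Proof. by move=> F0; rewrite big_nat_cond big1 // => i /andP[/F0]. Qed.

Lemma sum_nat_shift (R : nmodType) (A c : nat) (F : nat -> R) :
  \sum_(0 <= i < A) (if (c <= i)%N then F i else 0) =
  \sum_(0 <= i < A) (if (i + c < A)%N then F (i + c)%N else 0).
Proof.
have [cA|Ac] := leqP c A; last first.
  by rewrite !sumr_nat0 // => i /andP[_ iA]; rewrite ifF //; lia.
rewrite (big_cat_nat (n:=c)) //= sumr_nat0 ?add0r; last first.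
  by move=> i /andP[_ ic]; rewrite ifF //; lia.
rewrite -{1}(add0n c) big_addn [RHS](big_cat_nat (n:=A - c)) ?leq_subr //=.
rewrite [X in _ = _ + X]sumr_nat0 ?addr0 => [|i /andP[ic iA]]; last by rewrite ifF //; lia.
by apply: eq_big_nat => i /andP[_ iAc]; rewrite leq_addl ifT //; lia.
Qed.

Lemma sum_nat_cut (R : nmodType) (A B : nat) (F : nat -> R) :
  \sum_(0 <= k < A) (if (k < B)%N then F k else 0) = \sum_(0 <= k < minn A B) F k.
Proof.
have [AB|BA] := leqP A B.
  by apply: eq_big_nat => k /andP[_ kA]; rewrite ifT //; lia.
rewrite [LHS](big_cat_nat (n:=B)) ?leq0n ?(ltnW BA) //= [X in _ + X]sumr_nat0.
  by rewrite addr0; apply: eq_big_nat => k /andP[_ kB]; rewrite kB.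
by move=> k /andP[Bk _]; rewrite ltnNge Bk.
Qed.

(* The products prod_(i < a) (a - i) and prod_(a < i <= m) (a - i), which
   together form omega'(a). *)
Lemma prod_diff_below (R : comPzRingType) (a : nat) :
  \prod_(0 <= i < a) (a%:R - i%:R) = (a`!)%:R :> R.
Proof.
rewrite fact_prod natr_prod big_add1 /= big_nat_rev /=.
by apply: eq_big_nat => i /andP[_ ia]; rewrite -natrB; [congr _%:R|]; lia.
Qed.

Lemma prod_diff_above (R : comPzRingType) (a m : nat) : (a <= m)%N ->
  \prod_(a.+1 <= i < m.+1) (a%:R - i%:R) = (-1) ^+ (m - a) * ((m - a)`!)%:R :> R.
Proof.
move=> am; have -> : m.+1 = (a.+1 + (m - a))%N by lia.
elim: (m - a)%N => [|k IH]; first by rewrite addn0 big_geq // expr0 mulr1.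
rewrite addnS big_nat_recr ?leq_addr //= IH factS natrM exprS !natrD; ring.
Qed.

Lemma binz_negl (a b : int) : a < 0 -> binz a b = 0%N.
Proof. by case: a => [a|a] a_neg //; exfalso; lia. Qed.

Lemma binz_negr (a b : int) : b < 0 -> binz a b = 0%N.
Proof. by case: a => [a|a] //; case: b => [b|b] b_neg //; exfalso; lia. Qed.

Lemma binz_compl (a c : nat) : binz a (a%:Z - c%:Z) = 'C(a, c).
Proof.
have [ca|ac] := leqP c a; last by rewrite binz_negr ?bin_small //; lia.
have -> : a%:Z - c%:Z = (a - c)%N by lia.
by rewrite /= bin_sub.
Qed.

Section Bezoutian.
Variables (R : comPzRingType) (n : nat) (u v u' v' : R).

Definition lmono (j : nat) : R := u ^+ j * v ^+ (n - j).
Definition rmono (l : nat) : R := u' ^+ l * v' ^+ (n - l).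

Definition binform (f : nat -> R) (x y : R) : R :=
  \sum_(0 <= p < n.+2) f p * (x ^+ p * y ^+ (n.+1 - p)).

(* The bilinear form of the matrix (Hankel f) * (upper Toeplitz g), whose
   (j,l) entry is sum_(m <= l) f (j+m+1) g (l-m), against the monomial
   vectors (lmono j)_j and (rmono l)_l. *)
Definition hankel_toeplitz (f g : nat -> R) : R :=
  \sum_(0 <= j < n.+1) \sum_(0 <= l < n.+1)
    (\sum_(0 <= m < n.+1) f (j + m)%N.+1 * (if (m <= l)%N then g (l - m)%N else 0))
      * lmono j * rmono l.

(* The coefficient of f p * g q in hankel_toeplitz f g. *)
Definition cross_coef (p q : nat) : R := \sum_(0 <= m < n.+1)
  (if (m < p)%N && (q + m < n.+1)%N then lmono (p - m.+1) * rmono (q + m) else 0).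

Definition mono_pair (s l : nat) : R :=
  u ^+ (s - l) * v ^+ (n.+1 - (s - l)) * (u' ^+ l * v' ^+ (n.+1 - l)).

Lemma cross_coef_telescope (p q : nat) : (p <= n.+1)%N -> (q <= n.+1)%N ->
  (u * v' - u' * v) * cross_coef p q =
  mono_pair (p + q) q - mono_pair (p + q) (minn (p + q) n.+1).
Proof.
move=> pn qn; set K := minn p (n.+1 - q).
rewrite /cross_coef (big_cat_nat (n:=K)) ?leq0n //=; last by lia.
rewrite [X in _ * (_ + X)]sumr_nat0 ?addr0 => [|m /andP[Km _]]; last first.
  by rewrite ifF //; apply/negbTE; rewrite negb_and -!leqNgt; lia.
rewrite mulr_sumr (telescope_sumr_eq (fun k => - mono_pair (p + q) (q + k))) //.
  by rewrite opprK addn0 addrC; congr (_ - mono_pair _ _); lia.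
move=> m /andP[_ mK]; rewrite ifT; last by apply/andP; split; lia.
rewrite /mono_pair /lmono /rmono addnS.
have -> : (p + q - (q + m) = (p - m.+1).+1)%N by lia.
have -> : (p + q - (q + m).+1 = p - m.+1)%N by lia.
have -> : (n.+1 - (p - m.+1).+1 = n - (p - m.+1))%N by lia.
have -> : (n.+1 - (p - m.+1) = (n - (p - m.+1)).+1)%N by lia.
have -> : (n.+1 - (q + m) = (n - (q + m)).+1)%N by lia.
have -> : (n.+1 - (q + m).+1 = n - (q + m))%N by lia.
rewrite !exprS; ring.
Qed.

Section Expansion.
Variables f g : nat -> R.
Hypothesis f_supp : forall k, (n.+1 < k)%N -> f k = 0.

Lemma sum_lmono_shift (m : nat) :
  \sum_(0 <= j < n.+1) f (j + m)%N.+1 * lmono j =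
  \sum_(0 <= p < n.+2) (if (m.+1 <= p)%N then f p * lmono (p - m.+1) else 0).
Proof.
rewrite [RHS]sum_nat_shift [RHS]big_nat_recr //= ifF ?addr0; last by lia.
apply: eq_big_nat => j /andP[_ jn]; rewrite addnK addnS.
by case: ltnP => // le_n; rewrite f_supp ?mul0r.
Qed.

Lemma sum_rmono_shift (m : nat) :
  \sum_(0 <= l < n.+1) (if (m <= l)%N then g (l - m)%N else 0) * rmono l =
  \sum_(0 <= q < n.+2) (if (q + m < n.+1)%N then g q * rmono (q + m) else 0).
Proof.
under eq_bigr => l _ do rewrite (fun_if (fun x => x * rmono l)) mul0r.
rewrite sum_nat_shift [RHS]big_nat_recr //= ifF ?addr0; last by lia.
by apply: eq_big_nat => l _; rewrite addnK.
Qed.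

Lemma hankel_toeplitzE :
  hankel_toeplitz f g =
  \sum_(0 <= p < n.+2) \sum_(0 <= q < n.+2) f p * g q * cross_coef p q.
Proof.
transitivity (\sum_(0 <= m < n.+1)
    (\sum_(0 <= j < n.+1) f (j + m)%N.+1 * lmono j) *
    (\sum_(0 <= l < n.+1) (if (m <= l)%N then g (l - m)%N else 0) * rmono l)).
  under [RHS]eq_bigr => m _ do rewrite big_distrlr /=.
  rewrite exchange_big_nat; apply: eq_bigr => j _.
  rewrite exchange_big_nat; apply: eq_bigr => l _.
  by rewrite !big_distrl /=; apply: eq_bigr => m _; ring.
under eq_bigr => m _ do rewrite sum_lmono_shift sum_rmono_shift big_distrlr /=.
rewrite exchange_big_nat; apply: eq_bigr => p _.
rewrite exchange_big_nat; apply: eq_bigr => q _.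
rewrite /cross_coef big_distrr /=; apply: eq_bigr => m _.
by case: ifP; case: ifP => /=; rewrite ?(mul0r, mulr0) // => _ _; ring.
Qed.

End Expansion.

Lemma bezout_identity (f g : nat -> R) :
  (forall k, (n.+1 < k)%N -> f k = 0) -> (forall k, (n.+1 < k)%N -> g k = 0) ->
  (u * v' - u' * v) * (hankel_toeplitz f g - hankel_toeplitz g f) =
  binform f u v * binform g u' v' - binform f u' v' * binform g u v.
Proof.
move=> f_supp g_supp.
rewrite !hankel_toeplitzE // [X in _ * (_ - X)]exchange_big_nat /= /binform !big_distrlr /=.
rewrite -!sumrB mulr_sumr; apply: eq_big_nat => p /andP[_ pn].
rewrite -!sumrB mulr_sumr; apply: eq_big_nat => q /andP[_ qn].
have -> : (u * v' - u' * v) * (f p * g q * cross_coef p q - g q * f p * cross_coef q p) =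
    f p * g q * ((u * v' - u' * v) * cross_coef p q - (u * v' - u' * v) * cross_coef q p).
  by ring.
rewrite !cross_coef_telescope; try lia.
rewrite [(q + p)%N]addnC /mono_pair addKn addnK; ring.
Qed.

End Bezoutian.

(* The Hankel-Toeplitz form commutes with ring morphisms (used to evaluate a
   polynomial identity at a point) and depends only on the values of f, g. *)
Lemma hankel_toeplitz_rmorph (R S : comPzRingType) (h : {rmorphism R -> S})
    (n : nat) (u v u' v' : R) (f g : nat -> R) :
  h (hankel_toeplitz n u v u' v' f g) =
  hankel_toeplitz n (h u) (h v) (h u') (h v') (h \o f) (h \o g).
Proof.
rewrite /hankel_toeplitz /lmono /rmono rmorph_sum; apply: eq_bigr => j _.
rewrite rmorph_sum; apply: eq_bigr => l _.
rewrite !rmorphM !rmorphXn rmorph_sum; congr (_ * _ * (_ * _)).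
by apply: eq_bigr => m _; rewrite rmorphM (fun_if h) rmorph0.
Qed.

Lemma hankel_toeplitz_eq (R : comPzRingType) (n : nat) (u v u' v' : R)
    (f f' g g' : nat -> R) :
  f =1 f' -> g =1 g' ->
  hankel_toeplitz n u v u' v' f g = hankel_toeplitz n u v u' v' f' g'.
Proof.
move=> ff' gg'; apply: eq_bigr => j _; apply: eq_bigr => l _.
by congr (_ * _ * _); apply: eq_bigr => m _; rewrite ff' gg'.
Qed.

Definition bcoef (R : pzSemiRingType) (n p : nat) : R := ('C(n.+1, p))%:R.

Lemma bcoef_supp (R : pzSemiRingType) (n p : nat) : (n.+1 < p)%N -> bcoef R n p = 0.
Proof. by move=> np; rewrite /bcoef bin_small. Qed.

Lemma binform_binomial (R : comPzRingType) (n : nat) (x y : R) :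
  binform n (bcoef R n) x y = (x + y) ^+ n.+1.
Proof.
rewrite /binform (addrC x) exprDn big_mkord; apply: eq_bigr => p _.
by rewrite mulr_natl mulrC.
Qed.

Lemma invmx_congruence (F : fieldType) (m : nat) (V W Delta D M : 'M[F]_m) (c : F) :
  c != 0 -> Delta \in unitmx -> D \in unitmx ->
  V = c^-1 *: (W *m Delta) -> W *m M *m W^T = c *: D ->
  V \in unitmx /\ invmx V = invmx Delta *m M *m W^T *m invmx D.
Proof.
move=> c_neq0 Delta_unit D_unit defV congW.
set X := M *m W^T *m invmx D.
have W_rinv : W *m (c^-1 *: X) = 1%:M.
  by rewrite -scalemxAr !mulmxA congW -scalemxAl mulmxV // scalerA mulVf ?scale1r.
have W_linv : c^-1 *: X *m W = 1%:M := mulmx1C W_rinv.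
have V_linv : invmx Delta *m X *m V = 1%:M.
  transitivity (invmx Delta *m (c^-1 *: X *m W) *m Delta).
    by rewrite defV -scalemxAr -!scalemxAl -scalemxAr -scalemxAl !mulmxA.
  by rewrite W_linv mulmx1 mulVmx.
have [_ V_unit] := mulmx1_unit V_linv; split=> //.
by rewrite -[invmx V]mul1mx -V_linv -mulmxA mulmxV // mulmx1 /X !mulmxA.
Qed.

Section BernsteinInverse.
Variables (R : realFieldType) (n : nat).
Hypothesis n_gt0 : (0 < n)%N.

Lemma natn_neq0 : n%:R != 0 :> R.
Proof. by rewrite pnatr_eq0 -lt0n. Qed.

Definition stir (k : nat) : R := (stirling1 n.+1 k)%:~R.

Definition wterm (p k : nat) : R :=
  ('C(n.+1 - k, p - k))%:R * (stir k / n%:R ^+ (n.+1 - k)).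

Definition wcoef (p : nat) : R :=
  \sum_(0 <= k < n.+2) (if (k < p.+1)%N then wterm p k else 0).

Lemma wcoef_supp (p : nat) : (n.+1 < p)%N -> wcoef p = 0.
Proof.
move=> np; rewrite /wcoef sumr_nat0 // => k /andP[_ kn].
by rewrite /wterm bin_small ?mul0r ?if_same //; lia.
Qed.

Definition omega : {poly R} := \prod_(i < n.+1) ('X - (i%:R)%:P).

Lemma omega_expand : omega = \sum_(0 <= k < n.+2) (stir k)%:P * 'X^k.
Proof.
set pz := (\prod_(i < n.+1) ('X - (i%:Z)%:P) : {poly int}).
have size_pz : size pz = n.+2.
  by rewrite /pz size_prod_XsubC [index_enum _]unlock -enumT size_enum_ord.
have -> : omega = map_poly (intr : int -> R) pz.
  by rewrite /pz rmorph_prod; apply: eq_bigr => i _; rewrite rmorphB /= map_polyX map_polyC.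
rewrite -[pz]coefK poly_def size_pz rmorph_sum big_mkord; apply: eq_bigr => k _.
by rewrite -mul_polyC rmorphM /= map_polyC map_polyXn.
Qed.

(* On the line x + y = n the binary form with coefficients w is omega(x):
   the term s(n+1,k) x^k is recovered from n^(n+1-k) = (x+y)^(n+1-k). *)
Lemma binform_wcoef (x y : {poly R}) : x + y = (n%:R)%:P ->
  binform n (fun p => (wcoef p)%:P) x y = omega \Po x.
Proof.
move=> xy; rewrite omega_expand raddf_sum /binform.
under eq_bigr => p _ do rewrite /wcoef rmorph_sum big_distrl /=.
rewrite exchange_big_nat /=; apply: eq_big_nat => k /andP[_ kn].
rewrite mul_polyC comp_polyZ comp_Xn_poly -mul_polyC.
under eq_bigr => p _ do
  rewrite (fun_if (fun c => c%:P)) polyC0 (fun_if (fun z => z * _)) mul0r ltnS.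
rewrite sum_nat_shift (big_cat_nat (n:=n.+2 - k)) ?leq_subr //=.
rewrite [X in _ + X]sumr_nat0 ?addr0 => [|i /andP[ki _]]; last by rewrite ifF //; lia.
have stir_split : stir k = (stir k / n%:R ^+ (n.+1 - k)) * n%:R ^+ (n.+1 - k).
  by rewrite divfK // expf_neq0 // natn_neq0.
have n_pow : ((n%:R : R) ^+ (n.+1 - k))%:P = (y + x) ^+ (n.+1 - k).
  by rewrite (addrC y) xy rmorphXn.
rewrite stir_split polyCM n_pow exprDn big_distrr /= big_distrl /= big_mkord.
have -> : (n.+2 - k = (n.+1 - k).+1)%N by lia.
apply: eq_bigr => i _; rewrite ifT; last by case: i => /= i; lia.
have -> : (n.+1 - (i + k) = n.+1 - k - i)%N by lia.
rewrite /wterm exprD polyCM polyC_natr -[X in _ = _ * X * _]mulr_natl addnK; ring.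
Qed.

Lemma omega_root (b : 'I_n.+1) : omega.[b%:R] = 0.
Proof. by rewrite horner_prod (bigD1 b) //= hornerXsubC subrr mul0r. Qed.

Definition omega_except (b : 'I_n.+1) : {poly R} :=
  \prod_(i < n.+1 | i != b) ('X - (i%:R)%:P).

Lemma omega_split (b : 'I_n.+1) : omega = ('X - (b%:R)%:P) * omega_except b.
Proof. by rewrite /omega (bigD1 b). Qed.

Definition dcoef (a : nat) : R := (-1) ^+ (n - a) * (a`!)%:R * ((n - a)`!)%:R.

Lemma omega_except_eval (a b : 'I_n.+1) :
  (omega_except b).[a%:R] = if a == b then dcoef a else 0.
Proof.
rewrite horner_prod; case: eqP => [<-|/eqP ab]; last first.
  by rewrite (bigD1 a) //= hornerXsubC subrr mul0r.
rewrite big_mkcond /=.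
rewrite -(big_mkord xpredT (fun i => if i != a :> nat then ('X - (i%:R)%:P).[a%:R] else 1)).
rewrite (big_cat_nat (n:=a)) //=; last exact: ltnW.
rewrite [X in _ * X]big_ltn // eqxx mul1r /dcoef -mulrA [RHS]mulrCA.
congr (_ * _).
  rewrite -prod_diff_below; apply: eq_big_nat => i /andP[_ ia].
  by rewrite ifT ?hornerXsubC //; apply/eqP; lia.
rewrite -prod_diff_above; last by rewrite -ltnS.
apply: eq_big_nat => i /andP[ai _].
by rewrite ifT ?hornerXsubC //; apply/eqP; lia.
Qed.

Definition node_bez (a b : nat) : R :=
  hankel_toeplitz n a%:R (n%:R - a%:R) b%:R (n%:R - b%:R) wcoef (bcoef R n)
  - hankel_toeplitz n a%:R (n%:R - a%:R) b%:R (n%:R - b%:R) (bcoef R n) wcoef.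

(* With the first point left variable, the Bezout identity reads
   n (x - b) Q(x) = omega(x) n^(n+1), hence Q = n^n omega / (x - b). *)
Lemma node_bez_poly (b : 'I_n.+1) :
  let wP p := (wcoef p)%:P in
  let Q f g := hankel_toeplitz n 'X ((n%:R)%:P - 'X) (b%:R)%:P (n%:R - b%:R)%:P f g in
  Q wP (bcoef _ n) - Q (bcoef _ n) wP = (n%:R ^+ n)%:P * omega_except b.
Proof.
move=> wP Q.
have wP_supp k : (n.+1 < k)%N -> wP k = 0 by move=> nk; rewrite /wP wcoef_supp.
have := bezout_identity 'X ((n%:R)%:P - 'X) (b%:R)%:P (n%:R - b%:R)%:P wP_supp
  (@bcoef_supp _ n).
have sum_b : b%:R + (n%:R - b%:R) = n%:R :> R by rewrite addrC subrK.
rewrite !binform_wcoef; last 2 first.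
- by rewrite -polyCD sum_b.
- by rewrite addrC subrK.
rewrite comp_polyXr comp_polyCr omega_root polyC0 mul0r subr0 !binform_binomial.
rewrite -polyCD sum_b (omega_split b).
have -> : 'X * (n%:R - b%:R)%:P - (b%:R)%:P * ((n%:R)%:P - 'X)
    = (n%:R)%:P * ('X - (b%:R)%:P) :> {poly R} by rewrite polyCB; ring.
have nX_neq0 : (n%:R)%:P * ('X - (b%:R)%:P) != 0 :> {poly R}.
  by rewrite mulf_neq0 ?polyXsubC_eq0 ?polyC_eq0 ?natn_neq0.
by move=> bez; apply: (mulfI nX_neq0); rewrite bez rmorphXn exprS; ring.
Qed.

Lemma node_bez_eval (a b : 'I_n.+1) :
  node_bez a b = n%:R ^+ n * (if a == b then dcoef a else 0).
Proof.
have := congr1 (fun p => p.[a%:R]) (node_bez_poly b).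
rewrite /= hornerCM omega_except_eval => <-.
rewrite -horner_evalE rmorphB !hankel_toeplitz_rmorph /= !horner_evalE !hornerE.
congr (_ - _); apply: hankel_toeplitz_eq => k /=;
  by rewrite /bcoef ?rmorph_nat // horner_evalE hornerC.
Qed.

Lemma Htmx_entry (i j : 'I_n.+1) : Htmx R n i j = wcoef (i + j).+1.
Proof.
rewrite mxE /wcoef sum_nat_cut minnC -sum_nat_cut.
apply: eq_big_nat => k /andP[_ kd]; case: ltnP => kn.
  have -> : n%:Z - k%:Z + 1 = (n.+1 - k)%N by lia.
  have -> : n%:Z - i%:Z - j%:Z = (n.+1 - k)%N%:Z - ((i + j).+1 - k)%N%:Z by lia.
  by rewrite binz_compl /wterm /stir mulrA.
by rewrite binz_negl ?mul0r //; lia.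
Qed.

Lemma Ttmx_entry (i j : 'I_n.+1) :
  Ttmx R n i j = if (i <= j)%N then wcoef (j - i) else 0.
Proof.
rewrite mxE big_mkcond /=; case: leqP => ij /=; last by rewrite sumr_nat0.
have j_n := ltn_ord j.
rewrite /wcoef sum_nat_cut minnC.
have -> : minn (j - i).+1 n.+2 = (j - i).+1 by apply/minn_idPl; lia.
apply: eq_big_nat => k /andP[_ kd].
have -> : n%:Z - k%:Z + 1 = (n.+1 - k)%N by lia.
have -> : j%:Z - i%:Z - k%:Z = (j - i - k)%N by lia.
by rewrite /wterm /stir mulrA.
Qed.

Lemma Tmx_entry (i j : 'I_n.+1) :
  Tmx R n i j = if (i <= j)%N then bcoef R n (j - i) else 0.
Proof.
rewrite mxE; case: leqP => ij; last by rewrite binz_negr //; lia.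
by have -> : j%:Z - i%:Z = (j - i)%N by lia.
Qed.

Lemma Hmx_entry (i j : 'I_n.+1) : Hmx R n i j = bcoef R n (i + j).+1.
Proof. by rewrite mxE. Qed.

Definition bezmx : 'M[R]_n.+1 := Htmx R n *m Tmx R n - Hmx R n *m Ttmx R n.

Lemma congruence_entry (a b : 'I_n.+1) :
  (Vtmx R n *m bezmx *m (Vtmx R n)^T) a b = node_bez a b.
Proof.
rewrite mxE; under eq_bigr => l _ do rewrite !mxE big_distrl /=.
rewrite exchange_big /= /node_bez /hankel_toeplitz -sumrB big_mkord.
apply: eq_bigr => j _; rewrite -sumrB big_mkord; apply: eq_bigr => l _.
rewrite /bezmx !mxE !big_mkord.
under eq_bigr => m _ do rewrite Htmx_entry Tmx_entry.
under [X in _ * (_ - X) * _ = _]eq_bigr => m _ do rewrite Hmx_entry Ttmx_entry.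
rewrite /lmono /rmono; ring.
Qed.

Lemma Vtmx_congruence : Vtmx R n *m bezmx *m (Vtmx R n)^T = n%:R ^+ n *: Dmx R n.
Proof.
apply/matrixP => a b; rewrite congruence_entry node_bez_eval !mxE.
by case: eqP => [->|]; rewrite ?mulr1n ?mulr0n.
Qed.

Lemma Vmx_factor : Vmx R n = (n%:R ^+ n)^-1 *: (Vtmx R n *m Deltamx R n).
Proof.
apply/matrixP => a j; rewrite /Deltamx mul_mx_diag !mxE /bern.
have n_split : (n%:R : R) ^+ n = n%:R ^+ j * n%:R ^+ (n - j).
  by rewrite -exprD subnKC // -ltnS.
have -> : 1 - a%:R / n%:R = (n%:R - a%:R) / n%:R :> R by field; exact: natn_neq0.
by rewrite !expr_div_n n_split; field; rewrite !expf_neq0 ?natn_neq0.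
Qed.

End BernsteinInverse.

Lemma Dmx_unit (R : realFieldType) (n : nat) : Dmx R n \in unitmx.
Proof.
rewrite unitmxE det_diag unitfE; apply/prodf_neq0 => i _.
by rewrite mxE !mulf_neq0 ?signr_eq0 // pnatr_eq0 -lt0n fact_gt0.
Qed.

Lemma Deltamx_unit (R : realFieldType) (n : nat) : Deltamx R n \in unitmx.
Proof.
rewrite unitmxE det_diag unitfE; apply/prodf_neq0 => i _.
by rewrite mxE pnatr_eq0 -lt0n bin_gt0 -ltnS.
Qed.

Theorem corollary2p8 (R : realFieldType) (n : nat) (hn : (1 <= n)%N) :
  Vmx R n \in unitmx /\
  invmx (Vmx R n) =
    invmx (Deltamx R n) *m (Htmx R n *m Tmx R n - Hmx R n *m Ttmx R n)
      *m (Vtmx R n)^T *m invmx (Dmx R n).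
Proof.
apply: invmx_congruence (Deltamx_unit R n) (Dmx_unit R n)
  (Vmx_factor R hn) (Vtmx_congruence R hn).
by rewrite expf_neq0 // natn_neq0.
Qed.
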